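(* Let $\mathbb{F}_2$ be the free group on $T_1,T_2$, $X=\{-1,1\}^{\mathbb{F}_2}$ with the product of uniform measures $m$ and the shift action $(gx)^h=x^{hg}$, and $X'=\{x\in X: gx\ne x$ for all $g\ne e\}$. Let $g_1,\dots,g_4$ be $T_1T_2^{-1},T_1^{-1}T_2,T_2T_1^{-1},T_2^{-1}T_1$ and $g_5,\dots,g_{16}$ the twelve distinct reduced-length-$4$ products of two of them. Let $K$ be the least number such that $X'$ can be partitioned into $K$ Borel sets $B_1,\dots,B_K$ with $x$ and $g_ix$ in different sets for all $i\le 16$, $x\in X'$; fix such a partition (each $B_j$ has positive measure) and put $\kappa(x)=j$ for $x\in B_j$. Let $N$ be an odd integer and $Q\subseteq X$ a Borel set with $m(Q)<1/512$ such that for every $x\in X'\setminus Q$ and every $j\le K$ there is $w\in\mathbb{F}_2$ of odd reduced length at most $N$ with $wx\in B_j$. For $x\in X$ let $t(x)=\{T_1x,T_2x\}$ if $x^e=1$ and $t(x)=\{T_1^{-1}x,T_2^{-1}x\}$ if $x^e=-1$. Let $Y=X\times\{1,2\}$ with measure $\tfrac12 m$ on each copy, $\mathbb{F}_2$ acting by $g(x,j)=(gx,j)$, and $\rho(x,1)=(x,2)$, $\rho(x,2)=(x,1)$; write $x$ for $(x,1)$. Define a graph on $Y$ with exactly the following edges: (a) distinct $x,y\in X'\setminus Q$ in the first copy are adjacent iff $t(x)\cap t(y)\ne\emptyset$; (b) for $x,y\in X'$, $\rho(x)$ and $\rho(y)$ are adjacent iff $y=wx$ for some $w$ of even reduced length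 at most $2N+10$ and $\kappa(y)\ne\kappa(x)$; (c) $x\in X'\setminus Q$ in the first copy is adjacent to $\rho(z)$ iff $z=wx$ for some $w$ of odd reduced length at most $N$ and $\kappa(z)\notin\kappa(t(x))$. Points of $Q$ in the first copy and points outside $X'$ have no other edges. Then proper vertex colouring of this graph with the colour set $\{1,\dots,K\}$ is paradoxical.
   Context: A colouring $c:Y\to\{1,\dots,K\}$ satisfies the proper colouring rule if for almost every vertex $v$, $c(v)\ne c(v')$ for all neighbours $v'$ of $v$. The rule is paradoxical if (a) some colouring (not necessarily measurable) satisfies it, and (b) there is no pair $(\mu,c)$ where $\mu$ is a finitely additive probability measure on an algebra $\mathcal{B}$ of subsets of $Y$, invariant under $\mathbb{F}_2$ and $\rho$, containing all measurable sets of the (completed) measure on $Y$ and extending it, and $c$ is a colouring satisfying the rule all of whose colour classes lie in $\mathcal{B}$. *)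

From HB Require Import structures.
From mathcomp Require Import all_boot all_order all_algebra.
From mathcomp Require Import all_classical all_reals all_analysis.

Set Implicit Arguments.
Unset Strict Implicit.
Unset Printing Implicit Defensive.

Import Order.TTheory GRing.Theory Num.Theory.
Local Open Scope classical_set_scope.
Local Open Scope ring_scope.

(* A letter (a, b): a = false means T1, a = true means T2;
   b = false means the generator, b = true means its inverse. *)
Definition letter := (bool * bool)%type.
Definition linv (l : letter) : letter := (l.1, ~~ l.2).

Definition reducedb (s : seq letter) : bool :=
  if s is a :: t then path (fun a b => b != linv a) a t else true.

Definition red (s : seq letter) : seq letter :=
  foldr (fun a acc => if acc is b :: t then
                        (if b == linv a then t else a :: acc)
                      else [:: a]) [::] s.

Lemma red_reduced s : reducedb (red s).
Proof.
elim: s => [//|a s IH] /=.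
case E: (red s) IH => [//|b t] /= H.
case: ifP => [_|/negbT Hb]; last by rewrite /= Hb.
by case: t H E => [//|c u] /= /andP[].
Qed.

Definition F2 := {s : seq letter | reducedb s}.

Definition F2len (g : F2) : nat := size (proj1_sig g).

Definition F2mul (g h : F2) : F2 :=
  exist _ (red (proj1_sig g ++ proj1_sig h)) (red_reduced _).

Definition F2e : F2 := exist _ [::] isT.
Definition F2let (l : letter) : F2 := exist _ [:: l] isT.
Definition T1 : F2 := F2let (false, false).
Definition T1i : F2 := F2let (false, true).
Definition T2 : F2 := F2let (true, false).
Definition T2i : F2 := F2let (true, true).

Definition g1 := F2mul T1 T2i.
Definition g2 := F2mul T1i T2.
Definition g3 := F2mul T2 T1i.
Definition g4 := F2mul T2i T1.
Definition gfour : seq F2 := [:: g1; g2; g3; g4].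

Definition gset (g : F2) : Prop :=
  g \in gfour \/
  exists a b, a \in gfour /\ b \in gfour /\ F2len (F2mul a b) = 4%N /\
              g = F2mul a b.

(* x h = true encodes x^h = 1, x h = false encodes x^h = -1 *)
Definition X := F2 -> bool.

Definition act (g : F2) (x : X) : X := fun h => x (F2mul h g).

Definition cyl : set (set X) :=
  [set A | exists (h : F2) (b : bool), A = [set x : X | x h = b]].

Definition XT := g_sigma_algebraType cyl.

(* m is the product of uniform measures: every finite-dimensional cylinder
   with n distinct prescribed coordinates has measure 2^-n *)
Definition is_product_uniform (R : realType) (m : {measure set XT -> \bar R}) :=
  forall (n : nat) (f : 'I_n -> F2) (b : 'I_n -> bool), injective f ->
    m [set x : X | forall i, x (f i) = b i] = ((2 : R) ^- n)%:E.

Definition Xfree : set X := [set x | forall g : F2, g <> F2e -> act g x <> x].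

Definition tset (x : X) : set X :=
  if x F2e then [set act T1 x; act T2 x] else [set act T1i x; act T2i x].

(* (x, false) is the first copy, (x, true) the second *)
Definition Y := (X * bool)%type.
Definition actY (g : F2) (v : Y) : Y := (act g v.1, v.2).
Definition rho (v : Y) : Y := (v.1, ~~ v.2).

Definition slice (A : set Y) (b : bool) : set X := [set x | A (x, b)].

Definition Yborel (A : set Y) : Prop :=
  measurable (slice A false : set XT) /\ measurable (slice A true : set XT).

Definition mY (R : realType) (m : {measure set XT -> \bar R}) (A : set Y) : \bar R :=
  ((2 : R)^-1)%:E * (m (slice A false) + m (slice A true))%E.

Definition Ycompl_meas (R : realType) (m : {measure set XT -> \bar R})
    (A : set Y) : Prop :=
  exists B1 B2, Yborel B1 /\ Yborel B2 /\ B1 `<=` A /\ A `<=` B2 /\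
                mY m (B2 `\` B1) = 0%E.

Definition adj (Q : set X) (kappa : X -> nat) (N : nat) (v v' : Y) : Prop :=
  match v, v' with
  | (x, false), (y, false) =>
      x <> y /\ Xfree x /\ ~ Q x /\ Xfree y /\ ~ Q y /\
      exists u, tset x u /\ tset y u
  | (x, true), (y, true) =>
      Xfree x /\ Xfree y /\
      (exists w : F2, ~~ odd (F2len w) /\ (F2len w <= 2 * N + 10)%N /\ y = act w x) /\
      kappa y <> kappa x
  | (x, false), (z, true) | (z, true), (x, false) =>
      Xfree x /\ ~ Q x /\
      (exists w : F2, odd (F2len w) /\ (F2len w <= N)%N /\ z = act w x) /\
      (forall u, tset x u -> kappa z <> kappa u)
  end.

Definition colouring (K : nat) (c : Y -> nat) : Prop :=
  forall v, (1 <= c v <= K)%N.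

Definition satisfies_rule (R : realType) (m : {measure set XT -> \bar R})
    (E : Y -> Y -> Prop) (c : Y -> nat) : Prop :=
  exists Z : set Y, Yborel Z /\ mY m Z = 0%E /\
    forall v, ~ Z v -> forall v', E v v' -> c v <> c v'.

Definition is_algebra (B : set (set Y)) : Prop :=
  B setT /\ (forall A, B A -> B (~` A)) /\ (forall A A', B A -> B A' -> B (A `|` A')).

Definition good_pair (R : realType) (m : {measure set XT -> \bar R})
    (E : Y -> Y -> Prop) (K : nat) (B : set (set Y)) (mu : set Y -> R)
    (c : Y -> nat) : Prop :=
  is_algebra B /\
  (forall A, B A -> 0 <= mu A) /\ mu setT = 1 /\
  (forall A A', B A -> B A' -> A `&` A' = set0 -> mu (A `|` A') = mu A + mu A') /\
  (forall g A, B A -> B (actY g @` A) /\ mu (actY g @` A) = mu A) /\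
  (forall A, B A -> B (rho @` A) /\ mu (rho @` A) = mu A) /\
  (forall A, Ycompl_meas m A -> B A) /\
  (forall A B1 B2, Yborel B1 -> Yborel B2 -> B1 `<=` A -> A `<=` B2 ->
      mY m (B2 `\` B1) = 0%E -> (mu A)%:E = mY m B1) /\
  colouring K c /\ satisfies_rule m E c /\
  (forall j, (1 <= j <= K)%N -> B [set v | c v = j]).

Definition paradoxical (R : realType) (m : {measure set XT -> \bar R})
    (E : Y -> Y -> Prop) (K : nat) : Prop :=
  (exists c, colouring K c /\ satisfies_rule m E c) /\
  ~ (exists B mu c, good_pair m E K B mu c).

Definition borel_gcolouring (K' : nat) (k : X -> nat) : Prop :=
  (forall x, Xfree x -> (1 <= k x <= K')%N) /\
  (forall j, measurable ([set x | Xfree x /\ k x = j] : set XT)) /\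
  (forall x g, Xfree x -> gset g -> k x <> k (act g x)).

From HB Require Import structures.
From mathcomp Require Import all_boot all_order all_algebra.
From mathcomp Require Import all_classical all_reals all_analysis.
From Stdlib Require Import ClassicalEpsilon.
From mathcomp Require Import lra.
Import Order.TTheory GRing.Theory Num.Theory.
Local Open Scope classical_set_scope.
Local Open Scope ring_scope.

Set Implicit Arguments.
Unset Strict Implicit.
Unset Printing Implicit Defensive.

(* A colouring exists by choice: colour [(x, 2)] by [kappa x] and [(x, 1)] by
   [kappa (u x)], where [u x] is a point of [t x] chosen injectively using the
   tree structure of the free orbits; when [t x] and [t y] meet, [u y = g (u x)]
   for one of [g_1, ..., g_16], which [kappa] separates.

   Suppose [mu] and a colouring [c] with measurable classes obey the rule off a
   null set [Z], and let [x] be a point of [X' \ Q] whose [N]-ball in the second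
   copy misses [Z].  For words [w_j] of odd length at most [N] with
   [kappa (w_j x) = j], the points [(w_j x, 2)] are pairwise adjacent by (b), so
   their colours exhaust [1..K]; by (c), [c (x, 1) = c (p x, 2)] for a letter [p]
   with [p x] in [t x].  Sorting these [x] by [p] and translating by [p] yields
   four sets, pairwise disjoint by (a) and disjoint from a cylinder of measure
   [1/16] in the first copy, so invariance of [mu] bounds the good points by
   [1/2 - 1/32].  But they have measure more than [1/2 - 1/64 - 1/1024], as the
   points with a nontrivial stabiliser have measure at most [1/32] and
   [m Q < 1/512]. *)

(** * The free group *)

Definition red_step (a : letter) (s : seq letter) : seq letter :=
  if s is b :: t then (if b == linv a then t else a :: s) else [:: a].

Lemma linvK : involutive linv.
Proof. by case=> a b; rewrite /linv /= negbK. Qed.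

Lemma reducedb_cons a t : reducedb (a :: t) =
  (if t is b :: _ then b != linv a else true) && reducedb t.
Proof. by case: t. Qed.

Lemma red_step_reduced a s : reducedb s -> reducedb (red_step a s).
Proof.
case: s => [//|b t] /=; case: ifP => [_|/negbT b_neq] red_bt.
  by case: t red_bt => //= c u /andP[].
by rewrite /= b_neq red_bt.
Qed.

Lemma red_stepK a s : reducedb s -> red_step a (red_step (linv a) s) = s.
Proof.
case: s => [|b t] /=; first by rewrite eqxx.
case: ifP => [/eqP b_eq|_] red_bt; last by rewrite /red_step eqxx.
move: b_eq red_bt; rewrite linvK => ->; case: t => [//|c u] /= /andP[c_neq _].
by rewrite (negbTE c_neq).
Qed.

Lemma red_id s : reducedb s -> red s = s.
Proof.
elim: s => [//|a s IH]; rewrite reducedb_cons => /andP[head_ok red_s] /=.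
by rewrite IH //; case: s head_ok {IH red_s} => [//|b t] /= /negbTE ->.
Qed.

Lemma red_cat s t : red (s ++ t) = foldr red_step (red t) s.
Proof. by rewrite /red foldr_cat. Qed.

Lemma foldr_red_step_reduced s t : reducedb s -> reducedb (foldr red_step s t).
Proof. by move=> red_s; elim: t => //= a t; apply: red_step_reduced. Qed.

Lemma foldr_red s t : reducedb s -> foldr red_step s (red t) = foldr red_step s t.
Proof.
move=> red_s; elim: t => [//|a t /= <-]; rewrite -/(red t) -/(red_step a (red t)).
case: (red t) => [//|b u] /=; case: ifP => [/eqP ->|//].
by rewrite red_stepK //; apply: foldr_red_step_reduced.
Qed.

Definition winv (s : seq letter) : seq letter := rev (map linv s).

Lemma winvK : involutive winv.
Proof. by move=> s; rewrite /winv map_rev revK -map_comp (eq_map linvK) map_id. Qed.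

Lemma winv_reduced s : reducedb s -> reducedb (winv s).
Proof.
have sortedE t : reducedb t = sorted (fun a b => b != linv a) t by case: t.
rewrite !sortedE /winv rev_sorted sorted_map.
by case: s => [//|a t] /=; apply: sub_path => x y /=; rewrite linvK eq_sym.
Qed.

Lemma red_winv_cat s : reducedb s -> red (winv s ++ s) = [::].
Proof.
move=> red_s; rewrite red_cat red_id //; elim: s {red_s} => [//|a s IH].
by rewrite /winv /= rev_cons -cats1 foldr_cat /= linvK eqxx.
Qed.

Definition F2inv (g : F2) : F2 := exist _ (winv (val g)) (winv_reduced (valP g)).

Lemma F2mulA : associative F2mul.
Proof.
move=> g h k; apply: val_inj => /=.
rewrite [RHS]red_cat foldr_red ?red_reduced // foldr_cat.
by rewrite [LHS]red_cat red_id ?red_reduced // red_cat.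
Qed.

Lemma F2mul1g : left_id F2e F2mul.
Proof. by move=> g; apply: val_inj; rewrite /= red_id // (valP g). Qed.

Lemma F2mulg1 : right_id F2e F2mul.
Proof. by move=> g; apply: val_inj; rewrite /= cats0 red_id // (valP g). Qed.

Lemma F2mulVg : left_inverse F2e F2inv F2mul.
Proof. by move=> g; apply: val_inj; rewrite /= red_winv_cat // (valP g). Qed.

Lemma F2mulgV : right_inverse F2e F2inv F2mul.
Proof.
move=> g; apply: val_inj => /=.
by rewrite -{1}(winvK (val g)) red_winv_cat // winv_reduced // (valP g).
Qed.

HB.instance Definition _ := Countable.on F2.
HB.instance Definition _ := isGroup.Build F2 F2mulA F2mul1g F2mulg1 F2mulVg F2mulgV.

Lemma F2mulE (g h : F2) : F2mul g h = (g * h)%g.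
Proof. by []. Qed.

Lemma size_red_step a s :
  (size (red_step a s) <= (size s).+1)%N /\ odd (size (red_step a s)) = ~~ odd (size s).
Proof.
case: s => [//|b t] /=; case: ifP => _ /=; last by rewrite negbK.
by rewrite negbK; split=> //; apply: leqW.
Qed.

Lemma size_foldr_red_step s t :
  (size (foldr red_step s t) <= size s + size t)%N /\
  odd (size (foldr red_step s t)) = odd (size s + size t).
Proof.
elim: t => [|a t [IHle IHodd]] /=; first by rewrite addn0.
have [le_a odd_a] := size_red_step a (foldr red_step s t).
by rewrite addnS odd_a IHodd; split=> //; apply: leq_trans le_a _.
Qed.

Section LengthAndAction.
Local Open Scope group_scope.

Lemma F2letV l : (F2let l)^-1 = F2let (linv l).
Proof. exact: val_inj. Qed.

Lemma F2len_mul_le (g h : F2) : (F2len (g * h)%g <= F2len g + F2len h)%N.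
Proof.
rewrite /F2len /= red_cat red_id ?(valP h) // addnC.
exact: (size_foldr_red_step _ _).1.
Qed.

Lemma odd_F2len_mul (g h : F2) : odd (F2len (g * h)) = odd (F2len g + F2len h).
Proof.
rewrite /F2len /= red_cat red_id ?(valP h) // [(size (val g) + _)%N]addnC.
exact: (size_foldr_red_step _ _).2.
Qed.

Lemma F2lenV (g : F2) : F2len g^-1 = F2len g.
Proof. by rewrite /F2len /= /winv size_rev size_map. Qed.

Lemma act_mul g h x : act g (act h x) = act (g * h) x.
Proof. by apply/funext => k; rewrite /act !F2mulE mulgA. Qed.

Lemma act1 : act 1 =1 id.
Proof. by move=> x; apply/funext => k; rewrite /act F2mulE mulg1. Qed.

Lemma actK g : cancel (act g) (act g^-1).
Proof. by move=> x; rewrite act_mul mulVg act1. Qed.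

Lemma actVK g : cancel (act g^-1) (act g).
Proof. by move=> x; rewrite act_mul mulgV act1. Qed.

Lemma Xfree_act_inj x g h : Xfree x -> act g x = act h x -> g = h.
Proof.
move=> free_x gx_hx; apply: contrapT => g_neq_h.
apply: (free_x (h^-1 * g)); last by rewrite -act_mul gx_hx actK.
by move/mulg1_eq; rewrite invgK => /esym.
Qed.

Lemma Xfree_act g x : Xfree x -> Xfree (act g x).
Proof.
move=> free_x h h_neq1 hgx; apply: (free_x (h ^ g)).
  by move/eqP; rewrite conjg_eq1 => /eqP.
by rewrite conjgE -!act_mul hgx actK.
Qed.

End LengthAndAction.

Definition tletters (s : bool) : seq letter := [:: (false, ~~ s); (true, ~~ s)].

Lemma tletters_inE p s : (p \in tletters s) = (p.2 == ~~ s).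
Proof. by case: p => [[] b]; rewrite !inE /= ?andbT ?andbF ?orbF. Qed.

Lemma tsetP x u :
  tset x u <-> exists2 p, p \in tletters (x F2e) & u = act (F2let p) x.
Proof.
rewrite /tset /tletters; case: (x F2e) => /=; split.
- by case=> ->; [exists (false, false) | exists (true, false)]; rewrite ?inE ?eqxx ?orbT.
- by case=> p; rewrite !inE => /orP[] /eqP -> ->; [left|right].
- by case=> ->; [exists (false, true) | exists (true, true)]; rewrite ?inE ?eqxx ?orbT.
- by case=> p; rewrite !inE => /orP[] /eqP -> ->; [left|right].
Qed.

Lemma tset_letter x p : x F2e = ~~ p.2 -> tset x (act (F2let p) x).
Proof. by move=> sign; apply/tsetP; exists p; rewrite // tletters_inE sign negbK. Qed.

Definition gsetb (g : F2) : bool :=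
  (g \in gfour) || has (fun a => has (fun b =>
      (F2len (F2mul a b) == 4%N) && (g == F2mul a b)) gfour) gfour.

Lemma gsetbP g : gsetb g -> gset g.
Proof.
case/orP => [|/hasP[a a_in /hasP[b b_in /andP[/eqP len_ab /eqP ->]]]]; first by left.
by right; exists a, b.
Qed.

Lemma bool_in (b : bool) : b \in [:: true; false].
Proof. by case: b. Qed.

Section TLetters.
Local Open Scope group_scope.

Lemma tletters_gset s p q : p \in tletters s -> q \in tletters s -> p != q ->
  gset (F2let p * (F2let q)^-1).
Proof.
have: all (fun s => all (fun p => all (fun q =>
  (p == q) || gsetb (F2let p * (F2let q)^-1)) (tletters s)) (tletters s)) [:: true; false].
  by vm_compute.
move=> /allP/(_ s (bool_in s))/allP check p_in q_in.
by have /allP/(_ q q_in) := check p p_in => /orP[->//|/gsetbP].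
Qed.

(* If [u = p x = q y] and [cx x], [cy y] are the points picked in [t x], [t y],
   then [cy y = g (cx x)] for this [g]. *)
Lemma tletters_link_gset sx sy cx p cy q :
  cx \in tletters sx -> p \in tletters sx -> cy \in tletters sy -> q \in tletters sy ->
  let g := F2let cy * (F2let q)^-1 * F2let p * (F2let cx)^-1 in g = 1 \/ gset g.
Proof.
have: all (fun sx => all (fun sy =>
   all (fun cx => all (fun p => all (fun cy => all (fun q =>
     let g := F2let cy * (F2let q)^-1 * F2let p * (F2let cx)^-1 in
     (g == 1) || gsetb g) (tletters sy)) (tletters sy))
      (tletters sx)) (tletters sx)) [:: true; false]) [:: true; false].
  by vm_compute.
move=> /allP/(_ sx (bool_in sx))/allP/(_ sy (bool_in sy)) + cx_in p_in cy_in q_in.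
move=> /allP/(_ _ cx_in)/allP/(_ _ p_in)/allP/(_ _ cy_in)/allP/(_ _ q_in) /=.
by case/orP=> [/eqP|/gsetbP]; [left|right].
Qed.

End TLetters.

(** * An injective choice of a point of [t x] *)

Section TPick.
Local Open Scope group_scope.

Definition orbit (x : X) : set X := [set y | exists g, y = act g x].

Lemma orbit_act g x : orbit (act g x) = orbit x.
Proof.
apply/seteqP; split=> y [h ->]; first by exists (h * g); rewrite act_mul.
by exists (h * g^-1); rewrite act_mul mulgVK.
Qed.

Definition orbit_root (x : X) : X := epsilon (inhabits (fun _ => true)) (orbit x).

Lemma orbit_root_act g x : orbit_root (act g x) = orbit_root x.
Proof. by rewrite /orbit_root orbit_act. Qed.

Lemma orbit_rootP x : exists g, x = act g (orbit_root x).
Proof.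
have [g ->] : orbit x (orbit_root x) by apply: epsilon_spec; exists x, 1; rewrite act1.
by exists g^-1; rewrite actK.
Qed.

Definition root_word (x : X) : F2 :=
  epsilon (inhabits 1) (fun g => x = act g (orbit_root x)).

Lemma root_wordP x : x = act (root_word x) (orbit_root x).
Proof. exact: (epsilon_spec _ _ (orbit_rootP x)). Qed.

Lemma Xfree_orbit_root x : Xfree x -> Xfree (orbit_root x).
Proof. by rewrite {1}(root_wordP x) => /(Xfree_act (g := (root_word x)^-1)); rewrite actK. Qed.

Lemma root_word_uniq x g : Xfree x -> x = act g (orbit_root x) -> root_word x = g.
Proof.
by move=> /Xfree_orbit_root free_r x_eq; apply: (Xfree_act_inj free_r); rewrite -root_wordP.
Qed.

(* the letter of [t x] that prolongs the reduced word from the orbit root to [x] *)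
Definition next_letter (x : X) : letter :=
  let s := x F2e in
  if val (root_word x) is a :: _ then
    (if (false, ~~ s) == linv a then (true, ~~ s) else (false, ~~ s))
  else (false, ~~ s).

Lemma next_letter_in x : next_letter x \in tletters (x F2e).
Proof.
rewrite /next_letter /tletters; case: (val (root_word x)) => [|a _]; first exact: mem_head.
by case: ifP => _; rewrite !inE eqxx ?orbT.
Qed.

Lemma next_letter_reduced x : reducedb (next_letter x :: val (root_word x)).
Proof.
rewrite /next_letter; case: (val (root_word x)) (valP (root_word x)) => [//|a t] red_at.
rewrite reducedb_cons red_at andbT; case: ifP => [/eqP/(congr1 linv)|/negbT].
  by rewrite linvK => <-.
by apply: contra => /eqP ->; rewrite linvK.
Qed.

Definition tpick (x : X) : X := act (F2let (next_letter x)) x.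

Lemma tpick_tset x : tset x (tpick x).
Proof. by apply/tsetP; exists (next_letter x); first exact: next_letter_in. Qed.

Lemma root_word_tpick x :
  Xfree x -> val (root_word (tpick x)) = next_letter x :: val (root_word x).
Proof.
move=> free_x; have -> : root_word (tpick x) = F2let (next_letter x) * root_word x.
  apply: root_word_uniq; first exact: Xfree_act.
  by rewrite /tpick orbit_root_act -act_mul -root_wordP.
exact: red_id (next_letter_reduced x).
Qed.

Lemma tpick_inj x y : Xfree x -> Xfree y -> tpick x = tpick y -> x = y.
Proof.
move=> free_x free_y tpick_xy.
have root_xy : orbit_root x = orbit_root y.
  by have := congr1 orbit_root tpick_xy; rewrite !orbit_root_act.
have := root_word_tpick free_x; rewrite tpick_xy root_word_tpick // => -[_ /val_inj word_xy].
by rewrite (root_wordP x) (root_wordP y) root_xy word_xy.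
Qed.

Lemma tpick_shift x y p q : act (F2let p) x = act (F2let q) y ->
  tpick y = act (F2let (next_letter y) * (F2let q)^-1 * F2let p * (F2let (next_letter x))^-1)
                (tpick x).
Proof. by move=> pq; rewrite /tpick -!act_mul actK pq actK. Qed.

End TPick.

(** * Points with a nontrivial stabiliser *)

Lemma reducedb_nseq a j : a != linv a -> reducedb (nseq j a).
Proof.
move=> a_neq; elim: j => [//|j IH]; rewrite reducedb_cons IH andbT.
by case: j {IH}.
Qed.

Section FixedPoints.
Local Open Scope group_scope.
Variables (g : F2) (n : nat).
Hypothesis g_neq1 : g <> 1.

(* chosen so that the words [t^j] and [t^j g] below are reduced as written *)
Definition away_letter : letter :=
  if val g is a :: _ then (~~ a.1, false) else (false, false).

Lemma away_letter_neq : away_letter != linv away_letter.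
Proof. by rewrite /away_letter /linv; case: (val g) => [|[[] b] _]. Qed.

Lemma head_away a s : val g = a :: s -> a != away_letter /\ a != linv away_letter.
Proof. by rewrite /away_letter => ->; case: a => [[] []]. Qed.

Local Notation t := (F2let away_letter).

Lemma val_cons : exists a s, val g = a :: s.
Proof.
case eq_g: (val g) => [|a s]; last by exists a, s.
by case: g_neq1; apply: val_inj; exact: eq_g.
Qed.

Lemma val_away_expg j : val (t ^+ j) = nseq j away_letter.
Proof.
elim: j => [//|j IH]; rewrite expgS /= IH red_id ?reducedb_nseq ?away_letter_neq //.
by case: j {IH} => //= j; rewrite (negPf away_letter_neq).
Qed.

Lemma val_away_expg_mul j : val (t ^+ j * g) = nseq j away_letter ++ val g.
Proof.
rewrite /= val_away_expg red_id //; have [a [s eq_g]] := val_cons.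
have [a_neq a_neqV] := head_away eq_g.
elim: j => [|j IH]; first exact: valP.
rewrite [nseq _ _ ++ _]/= reducedb_cons IH andbT.
by case: j {IH} => [|j] /=; [rewrite eq_g | exact: away_letter_neq].
Qed.

Definition fix_coord (i : 'I_(n + n)) : F2 :=
  match fintype.split i with inl j => t ^+ j | inr j => t ^+ j * g end.

Definition fix_index (i : 'I_(n + n)) : 'I_n :=
  match fintype.split i with inl j => j | inr j => j end.

Lemma fix_coord_inj : injective fix_coord.
Proof.
have nseq_neq j j' : nseq j away_letter <> nseq j' away_letter ++ val g.
  have [a [s eq_g]] := val_cons; have [a_neq _] := head_away eq_g => eq_j.
  have : a \in nseq j away_letter by rewrite eq_j mem_cat eq_g mem_head orbT.
  by rewrite mem_nseq (negPf a_neq) andbF.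
move=> i i'; rewrite /fix_coord; case: splitP => j eq_i; case: splitP => j' eq_i' /(congr1 val);
  rewrite ?val_away_expg_mul ?val_away_expg => eq_jj'; apply: val_inj => /=; rewrite eq_i eq_i'.
- by have := congr1 size eq_jj'; rewrite !size_nseq.
- by case: (nseq_neq _ _ eq_jj').
- by case: (nseq_neq _ _ (esym eq_jj')).
- by have /eqP := congr1 size eq_jj'; rewrite !size_cat !size_nseq eqn_add2r => /eqP ->.
Qed.

(* [g x = x] forces [x (t^j) = x (t^j g)] for [j < n]: [2^n] cylinders of
   measure [2^-2n] each *)
Definition fix_cyl (b : {ffun 'I_n -> bool}) : set XT :=
  [set x : X | forall i, x (fix_coord i) = b (fix_index i)].

Definition fix_cyl_nth (k : nat) : set XT :=
  fix_cyl (nth [ffun=> false] (enum {ffun 'I_n -> bool}) k).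

Definition fix_cover : set XT := \big[setU/set0]_(k < #|{ffun 'I_n -> bool}|) fix_cyl_nth k.

Lemma fixed_sub_fix_cover x : act g x = x -> fix_cover x.
Proof.
move=> gx; pose b := [ffun j : 'I_n => x (t ^+ j)].
have b_enum : b \in enum {ffun 'I_n -> bool} by rewrite mem_enum.
have b_idx : (index b (enum {ffun 'I_n -> bool}) < #|{ffun 'I_n -> bool}|)%N.
  by rewrite cardE index_mem.
rewrite /fix_cover -bigcup_mkord; exists (Ordinal b_idx) => //=.
rewrite /fix_cyl_nth nth_index // => i; rewrite /fix_coord /fix_index.
case: splitP => j _; rewrite ffunE //.
by rewrite -[in RHS]gx.
Qed.

End FixedPoints.

Lemma measurable_coord (h : F2) (b : bool) : measurable ([set x : X | x h = b] : set XT).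
Proof. by apply: sub_sigma_algebra; exists h, b. Qed.

Lemma measurable_cyl n (f : 'I_n -> F2) (b : 'I_n -> bool) :
  measurable ([set x : X | forall i, x (f i) = b i] : set XT).
Proof.
have -> : ([set x : X | forall i, x (f i) = b i] : set XT) =
    \bigcap_(i in [set: 'I_n]) [set x : XT | x (f i) = b i].
  by apply/seteqP; split=> [x x_in i _|x x_in i]; [exact: x_in | apply: x_in].
by apply: fin_bigcap_measurable; [exact: finite_finset | move=> i _; apply: measurable_coord].
Qed.

Lemma measurable_fix_cover g n : measurable (fix_cover g n).
Proof. by apply: bigsetU_measurable => k _; apply: measurable_cyl. Qed.

(* the shift by [6] makes the pieces sum to at most [1/32] *)
Definition nonfree_piece (k : nat) : set XT :=
  if unpickle k is Some g then (if g == F2e then set0 else fix_cover g (k + 6)) else set0.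

Lemma measurable_nonfree_piece k : measurable (nonfree_piece k).
Proof.
by rewrite /nonfree_piece; case: unpickle => [g|//]; case: ifP => // _; apply: measurable_fix_cover.
Qed.

Lemma nonfree_sub_pieces : (~` Xfree : set XT) `<=` \bigcup_k nonfree_piece k.
Proof.
move=> x /= nonfree_x.
have [g [g_neq1 gx]] : exists g, g <> F2e /\ act g x = x.
  by apply: contrapT => no_g; apply: nonfree_x => g g_neq1 gx; apply: no_g; exists g.
exists (pickle g) => //; rewrite /nonfree_piece pickleK.
by case: eqP => // _; apply: fixed_sub_fix_cover.
Qed.

Section BernoulliShift.
Variables (R : realType) (m : {measure set XT -> \bar R}).
Hypothesis m_uniform : is_product_uniform m.

Lemma measure_setT : m setT = 1%E.
Proof.
have no_index : injective (fun _ : 'I_0 => F2e) by case.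
have := m_uniform (fun _ => true) no_index.
have -> : [set x : X | forall i : 'I_0, x F2e = true] = setT.
  by apply/seteqP; split=> // x _ [].
by move=> ->; rewrite expr0 invr1.
Qed.

Lemma measure_EFin (S : set XT) : measurable S -> exists2 s : R, m S = s%:E & (0 <= s)%R.
Proof.
move=> S_meas; have le1 : (m S <= 1)%E by rewrite -measure_setT le_measure ?inE.
have ge0 : (0 <= m S)%E by apply: measure_ge0.
by move: ge0 le1; case: (m S) => [s| |] //= s_ge0 _; exists s.
Qed.

Lemma measure_fix_cover_le g n : g <> F2e -> (m (fix_cover g n) <= ((2 : R) ^- n)%:E)%E.
Proof.
move=> g_neq1.
apply: le_trans (content_subadditive m (F := fix_cyl_nth g n)
  (n := #|{ffun 'I_n -> bool}|) _ (measurable_fix_cover g n) _) _ => [k _|//|].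
  exact: measurable_cyl.
rewrite (eq_bigr (fun _ => ((2 : R) ^- (n + n))%:E)); last first.
  by move=> k _; apply: m_uniform; apply: fix_coord_inj.
rewrite sumEFin big_const_ord lee_fin card_ffun card_bool card_ord.
rewrite iter_addr addr0 -(mulr_natr ((2 : R) ^- (n + n))) natrX exprD invfM -mulrA.
by rewrite mulVf ?mulr1.
Qed.

Lemma measure_nonfree_le : measurable (~` Xfree : set XT) ->
  (m (~` Xfree) <= ((32 : R)^-1)%:E)%E.
Proof.
move=> nonfree_meas.
apply: le_trans (measure_sigma_subadditive m measurable_nonfree_piece nonfree_meas
  nonfree_sub_pieces) _.
apply: le_trans (epsilon_trick0 xpredT (eps := (32 : R)^-1) _) => //.
apply: lee_nneseries => [k _ _|k _]; first exact: measure_ge0.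
have pow2_shift : (2 : R) ^- (k + 6) = 32^-1 / (2 ^ k.+1)%:R.
  by rewrite natrX -invfM -[32]/(2 ^ 5)%:R natrX -exprD addnC addnS.
rewrite /nonfree_piece; case: unpickle => [g|]; last by rewrite measure0 lee_fin.
case: eqP => [_|g_neq1]; first by rewrite measure0 lee_fin.
by rewrite -pow2_shift; apply: measure_fix_cover_le.
Qed.

End BernoulliShift.

Lemma mem_iota1 j K : (j \in iota 1 K) = (1 <= j <= K)%N.
Proof. by rewrite mem_iota add1n ltnS. Qed.

Section Colouring.
Variables (K : nat) (kappa : X -> nat).
Hypothesis kappa_col : borel_gcolouring K kappa.

Lemma measurable_Xfree : measurable (Xfree : set XT).
Proof.
have [kappa_range [kappa_meas _]] := kappa_col.
have -> : (Xfree : set XT) =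
    \big[setU/set0]_(j <- iota 1 K) [set x : XT | Xfree x /\ kappa x = j].
  rewrite -bigcup_seq; apply/seteqP; split=> [x free_x|x [j _ []//]].
  by exists (kappa x); rewrite //= mem_iota1 kappa_range.
by apply: bigsetU_measurable => j _; apply: kappa_meas.
Qed.

Lemma K_gt0 (R : realType) (m : {measure set XT -> \bar R}) :
  is_product_uniform m -> (0 < K)%N.
Proof.
move=> m_uniform; suff [x free_x] : exists x, Xfree x.
  by have /andP[] := kappa_col.1 x free_x; apply: leq_trans.
apply: contrapT => no_free; have nonfreeT : (~` Xfree : set XT) = setT.
  by apply/seteqP; split=> // x _ free_x; apply: no_free; exists x.
have := measure_nonfree_le m_uniform (measurableC measurable_Xfree).
by rewrite nonfreeT measure_setT // lee_fin; lra.
Qed.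

Variables (N : nat) (Q : set X).

Lemma kappa_tpick_neq x y u : Xfree x -> Xfree y -> x <> y ->
  tset x u -> tset y u -> kappa (tpick x) <> kappa (tpick y).
Proof.
move=> free_x free_y x_neq_y /tsetP[p p_in ->] /tsetP[q q_in /tpick_shift ty].
have [g_eq1|gset_g] := tletters_link_gset (next_letter_in x) p_in (next_letter_in y) q_in.
  by move: ty; rewrite g_eq1 act1 => /esym/tpick_inj-/(_ free_x free_y).
by rewrite ty; apply: kappa_col.2.2 gset_g; apply: Xfree_act.
Qed.

Definition tcolour (v : Y) : nat :=
  let (x, copy2) := v in
  if copy2 then (if pselect (Xfree x) then kappa x else 1%N)
  else (if pselect (Xfree x /\ ~ Q x) then kappa (tpick x) else 1%N).

Arguments tcolour : simpl never.

Lemma tcolour2 x : Xfree x -> tcolour (x, true) = kappa x.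
Proof. by move=> free_x; rewrite /tcolour; case: pselect. Qed.

Lemma tcolour1 x : Xfree x -> ~ Q x -> tcolour (x, false) = kappa (tpick x).
Proof. by move=> free_x Qx; rewrite /tcolour; case: pselect => // -[]. Qed.

Lemma tcolour_proper v v' : adj Q kappa N v v' -> tcolour v <> tcolour v'.
Proof.
have [_ [_ kappa_sep]] := kappa_col.
case: v => x []; case: v' => y [] /=.
- by move=> [free_x [free_y [_ kappa_neq]]]; rewrite !tcolour2 // => /esym.
- move=> [free_y [Qy [[w [_ [_ ->]]] kappa_tset]]].
  rewrite tcolour2 ?tcolour1 //; last exact: Xfree_act.
  by move=> eq_col; apply: (kappa_tset _ (tpick_tset y)).
- move=> [free_x [Qx [[w [_ [_ ->]]] kappa_tset]]].
  rewrite tcolour2 ?tcolour1 //; last exact: Xfree_act.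
  by move=> /esym eq_col; apply: (kappa_tset _ (tpick_tset x)).
- move=> [x_neq_y [free_x [Qx [free_y [Qy [u [tx ty]]]]]]].
  by rewrite !tcolour1 //; apply: kappa_tpick_neq tx ty.
Qed.

Lemma tcolour_range : (0 < K)%N -> colouring K tcolour.
Proof.
move=> K_gt0 [x copy2]; rewrite /tcolour.
have [kappa_range _] := kappa_col.
have one_range : (1 <= 1 <= K)%N by rewrite leqnn K_gt0.
case: copy2; case: pselect => [free|_] //=; first exact: kappa_range.
by apply: kappa_range; apply: Xfree_act; case: free.
Qed.

End Colouring.

(** * Finitely additive measures on an algebra of subsets of [Y] *)

Section FinitelyAdditive.
Variables (R : numDomainType) (B : set (set Y)) (mu : set Y -> R).
Hypothesis B_algebra : is_algebra B.
Hypothesis mu_ge0 : forall A, B A -> 0 <= mu A.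
Hypothesis mu_additive : forall A A', B A -> B A' -> A `&` A' = set0 ->
  mu (A `|` A') = mu A + mu A'.

Lemma algT : B setT. Proof. by case: B_algebra. Qed.
Lemma algC A : B A -> B (~` A). Proof. by case: B_algebra => _ [BC _]; apply: BC. Qed.
Lemma algU A A' : B A -> B A' -> B (A `|` A').
Proof. by case: B_algebra => _ [_ BU]; apply: BU. Qed.
Lemma alg0 : B set0. Proof. by rewrite -setCT; apply/algC/algT. Qed.

Lemma algI A A' : B A -> B A' -> B (A `&` A').
Proof. by move=> BA BA'; rewrite -[A]setCK -[A']setCK -setCU; apply/algC/algU; apply: algC. Qed.

Lemma algD A A' : B A -> B A' -> B (A `\` A').
Proof. by move=> BA BA'; rewrite setDE; apply: algI => //; apply: algC. Qed.

Lemma alg_bigsetU (I : eqType) (r : seq I) (F : I -> set Y) :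
  (forall i, i \in r -> B (F i)) -> B (\big[setU/set0]_(i <- r) F i).
Proof.
elim: r => [|i r IH] BF; first by rewrite big_nil; apply: alg0.
rewrite big_cons; apply: algU; first by apply: BF; rewrite mem_head.
by apply: IH => j j_in; apply/BF/mem_behead.
Qed.

Lemma mu0 : mu set0 = 0.
Proof.
have := mu_additive alg0 alg0 (setI0 set0); rewrite setU0 => /(canLR (addrK _)).
by rewrite subrr.
Qed.

Lemma le_mu A A' : B A -> B A' -> A `<=` A' -> mu A <= mu A'.
Proof.
move=> BA BA' subAA'; rewrite -(setDUK subAA') (mu_additive BA (algD BA' BA) (setDIK _ _)).
by rewrite lerDl mu_ge0 //; apply: algD.
Qed.

Lemma mu_setU_le A A' : B A -> B A' -> mu (A `|` A') <= mu A + mu A'.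
Proof.
move=> BA BA'; have -> : A `|` A' = A `|` (A' `\` A) by rewrite setUDr setDv setD0.
rewrite (mu_additive BA (algD BA' BA)) ?setDIK //.
by rewrite lerD2l le_mu //; apply: algD.
Qed.

Lemma mu_bigsetU_le (I : eqType) (r : seq I) (F : I -> set Y) :
  (forall i, i \in r -> B (F i)) ->
  mu (\big[setU/set0]_(i <- r) F i) <= \sum_(i <- r) mu (F i).
Proof.
elim: r => [|i r IH] BF; first by rewrite !big_nil mu0.
have BFr j : j \in r -> B (F j) by move=> j_in; apply/BF/mem_behead.
rewrite !big_cons; apply: le_trans (mu_setU_le (BF i (mem_head _ _)) (alg_bigsetU BFr)) _.
by rewrite lerD2l IH.
Qed.

Lemma mu_bigsetU (I : choiceType) (r : seq I) (F : I -> set Y) : uniq r ->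
  (forall i, B (F i)) -> (forall i j, i != j -> F i `&` F j = set0) ->
  mu (\big[setU/set0]_(i <- r) F i) = \sum_(i <- r) mu (F i).
Proof.
move=> + BF disjF; elim: r => [|i r IH]; first by rewrite !big_nil mu0.
move=> /= /andP[i_notin uniq_r]; rewrite !big_cons -IH //.
rewrite (mu_additive (BF i) (alg_bigsetU (fun j _ => BF j))) //.
rewrite -bigcup_seq; apply/seteqP; split=> // x [Fix [j j_in Fjx]].
have i_neq_j : i != j by apply: contraNneq i_notin => ->.
by have /seteqP[/(_ x) + _] := disjF i j i_neq_j; apply.
Qed.

End FinitelyAdditive.

(** * No invariant extension carries a proper colouring *)

Lemma iota_onto K (phi : nat -> nat) :
  (forall j, (1 <= j <= K)%N -> (1 <= phi j <= K)%N) ->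
  (forall j j', (1 <= j <= K)%N -> (1 <= j' <= K)%N -> phi j = phi j' -> j = j') ->
  forall k, (1 <= k <= K)%N -> exists2 j, (1 <= j <= K)%N & phi j = k.
Proof.
move=> phi_range phi_inj k k_range.
have uniq_phi : uniq (map phi (iota 1 K)).
  by rewrite map_inj_in_uniq ?iota_uniq // => j j'; rewrite !mem_iota1; apply: phi_inj.
have sub_phi : {subset map phi (iota 1 K) <= iota 1 K}.
  by move=> _ /mapP[j j_in ->]; rewrite mem_iota1 phi_range // -mem_iota1.
have [|_ eq_phi] := uniq_min_size uniq_phi sub_phi; first by rewrite size_map.
have : k \in map phi (iota 1 K) by rewrite eq_phi mem_iota1.
by case/mapP => j j_in ->; exists j; rewrite -?mem_iota1.
Qed.

Definition all_letters : seq letter :=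
  [:: (false, false); (false, true); (true, false); (true, true)].

Lemma mem_all_letters l : l \in all_letters.
Proof. by case: l => [[] []]. Qed.

Fixpoint words_upto (n : nat) : seq (seq letter) :=
  if n is n'.+1 then [::] :: [seq a :: s | a <- all_letters, s <- words_upto n'] else [:: [::]].

Lemma mem_words_upto n s : (size s <= n)%N -> s \in words_upto n.
Proof.
elim: n s => [|n IH] [|a s] //= size_s; rewrite inE; apply/orP; right.
exact: (allpairs_f cons (mem_all_letters a) (IH _ size_s)).
Qed.

Definition copy1 (S : set X) : set Y := [set v | v.2 = false /\ S v.1].

Lemma Yborel_copy1 S : measurable (S : set XT) -> Yborel (copy1 S).
Proof.
move=> S_meas; split.
  by rewrite (_ : slice _ _ = S) //; apply/seteqP; split=> x //= [].
by rewrite (_ : slice _ _ = set0) //; apply/seteqP; split=> x //= [].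
Qed.

Lemma mY_copy1 (R : realType) (m : {measure set XT -> \bar R}) S :
  mY m (copy1 S) = (((2 : R)^-1)%:E * m S)%E.
Proof.
rewrite /mY (_ : slice (copy1 S) false = S); last by apply/seteqP; split=> x //= [].
by rewrite (_ : slice (copy1 S) true = set0) ?measure0 ?adde0 //; apply/seteqP; split=> x //= [].
Qed.

Lemma mY_set0 (R : realType) (m : {measure set XT -> \bar R}) : mY m set0 = 0%E.
Proof.
rewrite /mY (_ : slice set0 false = set0) // (_ : slice set0 true = set0) //.
by rewrite measure0 adde0 mule0.
Qed.

Lemma actY_image g (A : set Y) v : (actY g @` A) v <-> A (actY (g^-1)%g v).
Proof.
split=> [[w Aw <-]|Av]; first by rewrite /actY /= actK; case: w Aw.
by exists (actY (g^-1)%g v) => //; rewrite /actY /= actVK; case: v Av.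
Qed.

Lemma rho_image (A : set Y) v : (rho @` A) v <-> A (rho v).
Proof.
split=> [[w Aw <-]|Av]; first by rewrite /rho /= negbK; case: w Aw.
by exists (rho v) => //; rewrite /rho /= negbK; case: v Av.
Qed.

(* [cylD] misses every [p x] with [p x] in [t x]: there [(p x)^(p^-1) = x^e = ~~ p.2],
   while [cylD] prescribes [p.2]. *)
Definition cylD : set X :=
  [set u | forall i : 'I_4, let p := nth (false, false) all_letters i in u (F2let p) = ~~ p.2].

Section Paradox.
Variables (R : realType) (m : {measure set XT -> \bar R}).
Variables (K : nat) (kappa : X -> nat) (N : nat) (Q : set X).
Hypothesis m_uniform : is_product_uniform m.
Hypothesis kappa_col : borel_gcolouring K kappa.
Hypothesis N_odd : odd N.
Hypothesis Q_meas : measurable (Q : set XT).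
Hypothesis Q_small : (m (Q : set XT) < (512 : R)^-1%:E)%E.
Hypothesis kappa_cover : forall x, Xfree x -> ~ Q x -> forall j, (1 <= j <= K)%N ->
  exists w : F2, odd (F2len w) /\ (F2len w <= N)%N /\ kappa (act w x) = j.

Lemma kappa_rep x j : Xfree x -> ~ Q x -> exists w : F2, (1 <= j <= K)%N ->
  [/\ odd (F2len w), (F2len w <= N)%N, kappa (act w x) = j &
      forall p, p \in tletters (x F2e) -> kappa (act (F2let p) x) = j -> w = F2let p].
Proof.
move=> free_x Qx; have [_ [_ kappa_sep]] := kappa_col.
case: (pselect (exists2 p, p \in tletters (x F2e) & kappa (act (F2let p) x) = j)).
  case=> p0 p0_in kappa_p0; exists (F2let p0) => _; split=> //; first by case: N N_odd.
  move=> p p_in kappa_p; case: (eqVneq p p0) => [->//|p_neq_p0].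
  have := kappa_sep _ _ (Xfree_act (g := F2let p0) free_x) (tletters_gset p_in p0_in p_neq_p0).
  by rewrite act_mul mulgVK kappa_p0 kappa_p.
move=> no_letter; case: (boolP (1 <= j <= K)%N) => [j_range|]; last by exists F2e.
have [w [odd_w [le_w kappa_w]]] := kappa_cover free_x Qx j_range.
by exists w => _; split=> // p p_in kappa_p; case: no_letter; exists p.
Qed.

Variables (B : set (set Y)) (mu : set Y -> R) (c : Y -> nat) (Z : set Y).
Hypothesis B_algebra : is_algebra B.
Hypothesis mu_ge0 : forall A, B A -> 0 <= mu A.
Hypothesis mu_additive : forall A A', B A -> B A' -> A `&` A' = set0 ->
  mu (A `|` A') = mu A + mu A'.
Hypothesis mu_actY : forall g A, B A -> B (actY g @` A) /\ mu (actY g @` A) = mu A.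
Hypothesis mu_rho : forall A, B A -> B (rho @` A) /\ mu (rho @` A) = mu A.
Hypothesis B_compl : forall A, Ycompl_meas m A -> B A.
Hypothesis mu_ext : forall A B1 B2, Yborel B1 -> Yborel B2 -> B1 `<=` A -> A `<=` B2 ->
  mY m (B2 `\` B1) = 0%E -> (mu A)%:E = mY m B1.
Hypothesis c_col : colouring K c.
Hypothesis c_classes : forall j, (1 <= j <= K)%N -> B [set v | c v = j].
Hypothesis Z_borel : Yborel Z.
Hypothesis Z_null : mY m Z = 0%E.
Hypothesis c_rule : forall v, ~ Z v -> forall v', adj Q kappa N v v' -> c v <> c v'.

Let alg_big := alg_bigsetU B_algebra.
Let mu_le := le_mu B_algebra mu_ge0 mu_additive.
Let muU_le := mu_setU_le B_algebra mu_ge0 mu_additive.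
Let mu_big_le := mu_bigsetU_le B_algebra mu_ge0 mu_additive.
Let mu_big := mu_bigsetU B_algebra mu_additive.

Lemma alg_Yborel A : Yborel A -> B A.
Proof. by move=> A_borel; apply: B_compl; exists A, A; do 4!split=> //; rewrite setDv mY_set0. Qed.

Lemma alg_copy1 S : measurable (S : set XT) -> B (copy1 S).
Proof. by move=> S_meas; apply/alg_Yborel/Yborel_copy1. Qed.

Lemma mu_Yborel A : Yborel A -> (mu A)%:E = mY m A.
Proof. by move=> A_borel; apply: (mu_ext (B2 := A)) => //; rewrite setDv mY_set0. Qed.

Lemma mu_copy1 S s : measurable (S : set XT) -> m S = s%:E -> mu (copy1 S) = s / 2.
Proof.
move=> S_meas mS; have := mu_Yborel (Yborel_copy1 S_meas).
by rewrite mY_copy1 mS -EFinM mulrC => -[].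
Qed.

Lemma alg_actY_rho g A : B A -> B (actY g @` (rho @` A)).
Proof. by move=> BA; apply: (mu_actY _ (mu_rho BA).1).1. Qed.

Lemma mu_Z : mu Z = 0.
Proof. by have := mu_Yborel Z_borel; rewrite Z_null => -[]. Qed.

(* contains every [(x, 1)] such that [Z] meets [(x, 1)] or some [(w x, 2)], [|w| <= N] *)
Definition Zshadow : set Y :=
  Z `|` \big[setU/set0]_(s <- words_upto N) actY (insubd F2e s : F2)^-1%g @` (rho @` Z).

Lemma alg_Zshadow : B Zshadow.
Proof.
apply: (algU B_algebra) => //; first exact: alg_Yborel.
by apply: alg_big => s _; apply: alg_actY_rho; apply: alg_Yborel.
Qed.

Lemma mu_Zshadow : mu Zshadow = 0.
Proof.
have BZ := alg_Yborel Z_borel.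
pose shift s := actY (insubd F2e s : F2)^-1%g @` (rho @` Z).
have B_shift s : s \in words_upto N -> B (shift s) by move=> _; apply: alg_actY_rho.
have mu_shift s : mu (shift s) = 0 by rewrite (mu_actY _ (mu_rho BZ).1).2 (mu_rho BZ).2 mu_Z.
apply/eqP; rewrite eq_le mu_ge0 ?andbT; last exact: alg_Zshadow.
apply: le_trans (muU_le BZ (alg_big B_shift)) _.
rewrite mu_Z add0r; apply: le_trans (mu_big_le B_shift) _.
by rewrite big1.
Qed.

Lemma Zshadow_ball x w : ~ Zshadow (x, false) -> (F2len w <= N)%N -> ~ Z (act w x, true).
Proof.
move=> no_shadow le_w Zwx; apply: no_shadow; right; rewrite -bigcup_seq.
exists (val w); first exact: mem_words_upto.
by rewrite valKd; apply/actY_image; rewrite invgK; apply/rho_image.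
Qed.

Definition good : set Y := copy1 (Xfree `&` ~` Q) `\` Zshadow.

Definition tsign (p : letter) : set Y := [set v | v.1 F2e = ~~ p.2].

Definition same_colour (g : F2) : set Y :=
  \big[setU/set0]_(j <- iota 1 K)
    ([set v | c v = j] `&` actY g^-1%g @` (rho @` [set v | c v = j])).

Lemma same_colourP g v : same_colour g v <-> c v = c (act g v.1, ~~ v.2).
Proof.
rewrite /same_colour -bigcup_seq; split=> [[j _ [<- /actY_image]]|c_eq].
  by rewrite invgK => /rho_image.
exists (c v); first by rewrite /= mem_iota1; apply: c_col.
by split=> //; apply/actY_image; rewrite invgK; apply/rho_image; rewrite /= -c_eq; case: v c_eq.
Qed.

Definition piece (p : letter) : set Y := good `&` tsign p `&` same_colour (F2let p).

Definition moved_piece (p : letter) : set Y := actY (F2let p) @` piece p.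

Lemma alg_good : B good.
Proof.
apply: (algD B_algebra) => //; last exact: alg_Zshadow.
apply/alg_copy1/measurableI; first exact: measurable_Xfree kappa_col.
exact: measurableC Q_meas.
Qed.

Lemma alg_piece p : B (piece p).
Proof.
apply: (algI B_algebra) => //; first apply: (algI B_algebra) => //.
- exact: alg_good.
- by apply: alg_Yborel; split; apply: measurable_coord.
apply: alg_big => j; rewrite mem_iota1 => j_range.
by apply: (algI B_algebra) => //; [apply: c_classes | apply: alg_actY_rho; apply: c_classes].
Qed.

Lemma rep_colours_inj x (rep : nat -> F2) : ~ Zshadow (x, false) -> Xfree x ->
  (forall j, (1 <= j <= K)%N ->
     [/\ odd (F2len (rep j)), (F2len (rep j) <= N)%N & kappa (act (rep j) x) = j]) ->
  forall j j', (1 <= j <= K)%N -> (1 <= j' <= K)%N ->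
  c (act (rep j) x, true) = c (act (rep j') x, true) -> j = j'.
Proof.
move=> no_shadow free_x rep_spec j j' j_range j'_range same_c; apply: contrapT => j_neq.
have [odd_j le_j kappa_j] := rep_spec j j_range.
have [odd_j' le_j' kappa_j'] := rep_spec j' j'_range.
apply: (c_rule (Zshadow_ball no_shadow le_j) _ same_c).
split; first exact: Xfree_act.
split; first exact: Xfree_act.
split; last by rewrite kappa_j kappa_j' => /esym.
exists (rep j' * (rep j)^-1)%g; split; [|split].
- by rewrite odd_F2len_mul F2lenV oddD odd_j odd_j'.
- apply: leq_trans (F2len_mul_le _ _) _; rewrite F2lenV.
  by apply: leq_trans (leq_add le_j' le_j) _; rewrite addnn -mul2n leq_addr.
- by rewrite act_mul mulgVK.
Qed.

Lemma good_cover v : good v -> exists2 p, p \in tletters (v.1 F2e) & piece p v.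
Proof.
case: v => x b [[/= -> [free_x Qx]] no_shadow].
have Zx : ~ Z (x, false) by move=> Zx; apply: no_shadow; left.
have [rep rep_spec] := boolp.choice (fun j => kappa_rep j free_x Qx).
have rep_inj := rep_colours_inj no_shadow free_x
  (fun j j_range => let: And4 o l k _ := rep_spec j j_range in And3 o l k).
have [j j_range c_x] := iota_onto (fun j _ => c_col _) rep_inj (c_col (x, false)).
have [odd_j le_j kappa_j rep_letter] := rep_spec j j_range.
have [u tu kappa_u] : exists2 u, tset x u & kappa (act (rep j) x) = kappa u.
  apply: contrapT => no_u; apply: (c_rule Zx (v' := (act (rep j) x, true))); last exact/esym.
  split=> //; split=> //; split; first by exists (rep j).
  by move=> u tu kappa_eq; apply: no_u; exists u.
case/tsetP: tu kappa_u => p p_in -> kappa_p.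
exists p => //; have rep_p : rep j = F2let p by apply: rep_letter; rewrite -?kappa_p.
split; first split; first by split.
  by rewrite /tsign /=; move: p_in; rewrite tletters_inE => /eqP ->; rewrite negbK.
by apply/same_colourP; rewrite /= -c_x rep_p.
Qed.

Lemma moved_pieceP p u b : moved_piece p (u, b) ->
  let x := act (F2let p)^-1%g u in
  [/\ b = false, Xfree x /\ ~ Q x, ~ Z (x, false), x F2e = ~~ p.2 & c (x, false) = c (u, true)].
Proof.
move/actY_image => [[[[/= -> free_Q] no_shadow] sign] /same_colourP]; rewrite /= actVK => c_eq.
by split=> // Zx; apply: no_shadow; left.
Qed.

Lemma moved_piece_disjoint p q : p != q -> moved_piece p `&` moved_piece q = set0.
Proof.
move=> p_neq_q; apply/seteqP; split=> // -[u b] [/moved_pieceP[-> [free_x Qx] Zx sign_x c_x]].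
case/moved_pieceP=> _ [free_y Qy] _ sign_y c_y.
have free_u : Xfree u by rewrite -(actVK (F2let p) u); apply: Xfree_act.
apply: (c_rule Zx (v' := (act (F2let q)^-1%g u, false))); last by rewrite c_x c_y.
split.
  move=> /(Xfree_act_inj free_u)/invg_inj/(congr1 val) [] /eqP.
  by rewrite (negPf p_neq_q).
do 4!split=> //; exists u; split.
  by rewrite -{2}(actVK (F2let p) u); apply: tset_letter.
by rewrite -{2}(actVK (F2let q) u); apply: tset_letter.
Qed.

Lemma moved_piece_cylD p : moved_piece p `&` copy1 cylD = set0.
Proof.
apply/seteqP; split=> // -[u b] [/moved_pieceP[_ _ _ sign _] [_ D_u]].
have [i p_i] : exists i : 'I_4, nth (false, false) all_letters i = linv p.
  have lt_idx : (index (linv p) all_letters < 4)%N by rewrite index_mem mem_all_letters.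
  by exists (Ordinal lt_idx); rewrite nth_index ?mem_all_letters.
have := D_u i; rewrite /= p_i -F2letV; move: sign; rewrite /act F2mulE mul1g => ->.
by case: p {p_i} => a [].
Qed.

Lemma measure_cylD : m (cylD : set XT) = ((2 : R)^-4)%:E.
Proof.
have letter_inj : injective (fun i : 'I_4 => F2let (nth (false, false) all_letters i)).
  by move=> i j /(congr1 val) [] /eqP; rewrite nth_uniq // => /eqP; apply: val_inj.
exact: (m_uniform (fun i => ~~ (nth (false, false) all_letters i).2) letter_inj).
Qed.

Lemma mu_good_gt : 2^-1 - 64^-1 - 1024^-1 < mu good.
Proof.
have nonfree_meas := measurableC (measurable_Xfree kappa_col).
have [sX mX sX_ge0] := measure_EFin m_uniform nonfree_meas.
have [sQ mQ sQ_ge0] := measure_EFin m_uniform Q_meas.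
have sX_le : sX <= 32^-1 by rewrite -lee_fin -mX measure_nonfree_le.
have sQ_lt : sQ < 512^-1 by rewrite -lte_fin -mQ.
have cover : copy1 setT `<=` good `|` Zshadow `|` copy1 (~` Xfree) `|` copy1 Q.
  move=> [x b] [/= -> _]; case: (pselect (Q x)) => Qx; first by right.
  case: (pselect (Xfree x)) => free_x; last by left; right.
  by case: (pselect (Zshadow (x, false))) => shadow_x; [left; left; right | left; left; left].
have BU := algU B_algebra.
have Bgood := alg_good; have BZs := alg_Zshadow.
have BX := alg_copy1 nonfree_meas; have BQ := alg_copy1 Q_meas.
have le_union := mu_le (alg_copy1 measurableT) (BU _ _ (BU _ _ (BU _ _ Bgood BZs) BX) BQ) cover.
have sub1 := muU_le (BU _ _ (BU _ _ Bgood BZs) BX) BQ.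
have sub2 := muU_le (BU _ _ Bgood BZs) BX.
have sub3 := muU_le Bgood BZs.
rewrite (mu_copy1 measurableT (measure_setT m_uniform)) in le_union.
rewrite (mu_copy1 nonfree_meas mX) in sub2; rewrite (mu_copy1 Q_meas mQ) in sub1.
rewrite mu_Zshadow in sub3; lra.
Qed.

Lemma mu_good_le : mu good <= 2^-1 - 32^-1.
Proof.
have Bmoved p : p \in all_letters -> B (moved_piece p).
  by move=> _; apply: (mu_actY _ (alg_piece p)).1.
have Bpiece p : p \in all_letters -> B (piece p) by move=> _; apply: alg_piece.
have cylD_meas : measurable (cylD : set XT) by apply: measurable_cyl.
have BD := alg_copy1 cylD_meas.
have good_le : mu good <= \sum_(p <- all_letters) mu (moved_piece p).
  rewrite (eq_bigr _ (fun p _ => (mu_actY _ (alg_piece p)).2)).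
  apply: le_trans (mu_big_le Bpiece); apply: mu_le alg_good (alg_big Bpiece) _.
  by move=> v /good_cover[p _ piece_v]; rewrite -bigcup_seq; exists p => //; apply: mem_all_letters.
have moved_D : mu (\big[setU/set0]_(p <- all_letters) moved_piece p) + mu (copy1 cylD)
    <= mu (copy1 setT).
  have Bunion := alg_big Bmoved.
  rewrite -(mu_additive Bunion BD).
    apply: mu_le (algU B_algebra Bunion BD) (alg_copy1 measurableT) _.
    move=> [u b] []; last by case.
    by rewrite -bigcup_seq => -[p _ /moved_pieceP[->]].
  rewrite -bigcup_seq; apply/seteqP; split=> // v [[p _ moved_v] D_v].
  by have /seteqP[/(_ v) + _] := moved_piece_cylD p; apply.
rewrite (mu_big _ (fun p => (mu_actY _ (alg_piece p)).1)) // in moved_D; last first.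
  by move=> p q; apply: moved_piece_disjoint.
rewrite (mu_copy1 measurableT (measure_setT m_uniform)) in moved_D.
rewrite (mu_copy1 cylD_meas measure_cylD) in moved_D.
by move: moved_D; rewrite -natrX; lra.
Qed.

Lemma no_good_pair_contra : False.
Proof. by have := mu_good_gt; have := mu_good_le; lra. Qed.

End Paradox.

Lemma exists_proper_colouring (R : realType) (m : {measure set XT -> \bar R})
    K kappa N (Q : set X) :
  is_product_uniform m -> borel_gcolouring K kappa ->
  exists c, colouring K c /\ satisfies_rule m (adj Q kappa N) c.
Proof.
move=> m_uniform kappa_col; exists (tcolour kappa Q); split.
  exact/tcolour_range/(K_gt0 kappa_col m_uniform).
exists set0; split; first by split; exact: measurable0.
split; first exact: mY_set0.
by move=> v _ v'; apply: (tcolour_proper kappa_col).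
Qed.

Lemma no_good_pair (R : realType) (m : {measure set XT -> \bar R}) K kappa N (Q : set X) :
  is_product_uniform m -> borel_gcolouring K kappa -> odd N -> measurable (Q : set XT) ->
  (m (Q : set XT) < (512 : R)^-1%:E)%E ->
  (forall x, Xfree x -> ~ Q x -> forall j, (1 <= j <= K)%N ->
     exists w : F2, odd (F2len w) /\ (F2len w <= N)%N /\ kappa (act w x) = j) ->
  ~ exists B mu c, good_pair m (adj Q kappa N) K B mu c.
Proof.
move=> m_uniform kappa_col N_odd Q_meas Q_small kappa_cover [B [mu [c good]]].
have [B_alg [mu_ge0 [_ [mu_add [mu_actY [mu_rho [B_compl [mu_ext [c_col [rule c_classes]]]]]]]]]]
  := good.
have [Z [Z_borel [Z_null c_rule]]] := rule.
exact: (no_good_pair_contra m_uniform kappa_col N_odd Q_meas Q_small kappa_cover B_alg mu_ge0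
  mu_add mu_actY mu_rho B_compl mu_ext c_col c_classes Z_borel Z_null c_rule).
Qed.

Theorem proposition5 (R : realType) (m : {measure set XT -> \bar R})
  (K : nat) (kappa : X -> nat) (N : nat) (Q : set X) :
  is_product_uniform m ->
  (* K is the least size of a Borel partition of X' as described,
     and kappa is such a partition, each class of positive measure *)
  borel_gcolouring K kappa ->
  (forall K' k, borel_gcolouring K' k -> (K <= K')%N) ->
  (forall j, (1 <= j <= K)%N ->
     (0 < m ([set x | Xfree x /\ kappa x = j] : set XT))%E) ->
  odd N ->
  measurable (Q : set XT) ->
  (m (Q : set XT) < (512 : R)^-1%:E)%E ->
  (forall x, Xfree x -> ~ Q x -> forall j, (1 <= j <= K)%N ->
     exists w : F2, odd (F2len w) /\ (F2len w <= N)%N /\ kappa (act w x) = j) ->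
  paradoxical m (adj Q kappa N) K.
Proof.
move=> m_uniform kappa_col _ _ N_odd Q_meas Q_small kappa_cover; split.
  exact: exists_proper_colouring.
exact: no_good_pair.
Qed.
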